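(* Let $\mathfrak{k}$ be a field, $n\ge2$, $r_1,\dots,r_n$ positive integers, and ${\mathcal A}=(x_{i_1\ldots i_n})_{1\le i_j\le r_j}$ a box-shaped matrix of distinct indeterminates with polynomial ring $\mathfrak{k}[{\mathcal A}]$. For $l=1,\dots,n$ let $I_l=I_2({\mathcal A}_l)\mathfrak{k}[{\mathcal A}]+(x_{i_1\ldots i_n}: i_l=r_l)$, where ${\mathcal A}_l$ is the sub-box-shaped matrix of entries with $i_l<r_l$. Then $\bigcap_{l=1}^n I_l=I_2({\mathcal A})+(x_{r_1\ldots r_n})$.
   Context: $\mathfrak{k}$ is algebraically closed of characteristic $0$. The $2\times2$ minors of a box-shaped matrix $(a_{i_1\ldots i_n})$ are the elements $a_{i_1\ldots i_l\ldots i_n}a_{j_1\ldots j_l\ldots j_n}-a_{i_1\ldots i_{l-1}j_li_{l+1}\ldots i_n}a_{j_1\ldots j_{l-1}i_lj_{l+1}\ldots j_n}$ for any coordinate $l$ and any two index points; $I_2(\cdot)$ denotes the ideal they generate. *)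

From HB Require Import structures.
From mathcomp Require Import all_boot all_order all_algebra.
From mathcomp Require Import mpoly.
Set Implicit Arguments. Unset Strict Implicit. Unset Printing Implicit Defensive.
Import GRing.Theory.
Local Open Scope ring_scope.

(* Index points of an n-dimensional box r_1 x ... x r_n, 0-indexed:
   a point is a function p : 'I_n -> nat with p j < r j. *)
Definition boxM (n : nat) (r : 'I_n -> nat) : nat := (\max_(j < n) r j)%N.

Definition box (n : nat) (r : 'I_n -> nat) : predArgType :=
  {p : {ffun 'I_n -> 'I_(boxM r)} | [forall j, (p j < r j)%N]}.

Definition coord n (r : 'I_n -> nat) (p : box r) (j : 'I_n) : nat := val p j.

Definition swapc n (r : 'I_n -> nat) (l : 'I_n) (a b : box r) : box r :=
  insubd a [ffun j => if j == l then val b j else val a j].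

Definition polyA (k : fieldType) n (r : 'I_n -> nat) := {mpoly k[#|box r|]}.

Definition xA (k : fieldType) n (r : 'I_n -> nat) (p : box r) : polyA k r :=
  'X_(enum_rank p).

Definition minor2 (k : fieldType) n (r : 'I_n -> nat) (l : 'I_n) (a b : box r)
  : polyA k r :=
  xA k a * xA k b - xA k (swapc l a b) * xA k (swapc l b a).

Definition ideal_gen (R : comNzRingType) (S : R -> Prop) (x : R) : Prop :=
  exists s : seq (R * R),
    (forall q, q \in s -> S q.2) /\ x = \sum_(q <- s) q.1 * q.2.

Definition gens_J (k : fieldType) n (r : 'I_n -> nat) (f : polyA k r) : Prop :=
  (exists l a b, f = minor2 k l a b) \/
  (exists p : box r, (forall j, coord p j = (r j).-1) /\ f = xA k p).

(* generators of I_l = I_2(A_l) k[A] + (x_{i_1...i_n} : i_l = r_l), where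
   A_l is the sub-box of entries with i_l < r_l (0-indexed: i_l < r_l - 1) *)
Definition gens_I (k : fieldType) n (r : 'I_n -> nat) (l : 'I_n) (f : polyA k r)
  : Prop :=
  (exists l' a b, (coord a l < (r l).-1)%N /\ (coord b l < (r l).-1)%N /\
                  f = minor2 k l' a b) \/
  (exists p : box r, coord p l = (r l).-1 /\ f = xA k p).

From Pilot Require Import Defs.
From HB Require Import structures.
From mathcomp Require Import all_boot all_order all_algebra.
From mathcomp Require Import mpoly.
Set Implicit Arguments. Unset Strict Implicit. Unset Printing Implicit Defensive.
Import GRing.Theory.
Local Open Scope ring_scope.

(* Send x_p to the monomial prod_l y_(l, p_l) of a Segre-type embedding.  Two
   monomials of k[A] with the same image have the same marginals, so one is
   turned into the other by coordinate swaps, each of which changes it by a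
   multiple of a 2x2 minor.  Group the terms of f by their image.  If, in every
   direction l, some point of a group has last coordinate r_l, then swaps make
   each monomial of the group divisible by x_(r_1...r_n).  Otherwise the group
   misses the value r_l in some direction l; every generator of I_l maps to 0
   or to a multiple of y_(l, r_l), so for f in I_l the coefficients of the group
   add up to 0 and the group is a combination of binomials in I_2(A). *)

Section IdealGen.
Variables (R : comNzRingType) (S : R -> Prop).

Lemma ideal_gen0 : ideal_gen S 0.
Proof. by exists [::]; rewrite big_nil. Qed.

Lemma ideal_gen_mem x : S x -> ideal_gen S x.
Proof.
move=> Sx; exists [:: (1, x)]; rewrite big_seq1 mul1r.
by split=> // q; rewrite inE => /eqP ->.
Qed.

Lemma ideal_genD x y : ideal_gen S x -> ideal_gen S y -> ideal_gen S (x + y).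
Proof.
move=> [s [Ss ->]] [t [St ->]]; exists (s ++ t); rewrite big_cat.
by split=> // q; rewrite mem_cat => /orP[/Ss | /St].
Qed.

Lemma ideal_genMl c x : ideal_gen S x -> ideal_gen S (c * x).
Proof.
move=> [s [Ss ->]]; exists [seq (c * q.1, q.2) | q <- s]; split.
  by move=> _ /mapP[q /Ss Sq ->].
by rewrite big_map mulr_sumr; apply: eq_bigr => q _; rewrite mulrA.
Qed.

Lemma ideal_genMr c x : ideal_gen S x -> ideal_gen S (x * c).
Proof. by rewrite mulrC; apply: ideal_genMl. Qed.

Lemma ideal_genB x y : ideal_gen S x -> ideal_gen S y -> ideal_gen S (x - y).
Proof. by move=> Sx Sy; rewrite -mulN1r; apply/ideal_genD/ideal_genMl. Qed.

Lemma ideal_gen_sum (I : eqType) (s : seq I) (P : pred I) (F : I -> R) :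
  (forall i, i \in s -> P i -> ideal_gen S (F i)) ->
  ideal_gen S (\sum_(i <- s | P i) F i).
Proof.
move=> SF; rewrite big_seq_cond; apply: big_ind => //.
- exact: ideal_gen0.
- exact: ideal_genD.
- by move=> i /andP[]; apply: SF.
Qed.

End IdealGen.

Lemma ideal_gen_sub (R : comNzRingType) (S T : R -> Prop) x :
  (forall y, S y -> ideal_gen T y) -> ideal_gen S x -> ideal_gen T x.
Proof.
move=> ST [s [Ss ->]]; apply: ideal_gen_sum => q qs _.
by apply/ideal_genMl/ST/Ss.
Qed.

Section Box.
Variables (n : nat) (r : 'I_n -> nat).
Local Notation B := (box r).

Definition ocoord (p : B) (j : 'I_n) : 'I_(boxM r) := val p j.

Lemma coordE (p : B) j : Defs.coord p j = ocoord p j.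
Proof. by []. Qed.

Lemma ocoord_lt (p : B) j : (ocoord p j < r j)%N.
Proof. by have /forallP := valP p; apply. Qed.

Lemma ocoord_swapc l (a b : B) j :
  ocoord (swapc l a b) j = if j == l then ocoord b j else ocoord a j.
Proof.
rewrite /ocoord /swapc insubdK ?ffunE //.
by apply/forallP => i; rewrite ffunE; case: ifP => _; apply: ocoord_lt.
Qed.

Lemma box_eq (p q : B) : (forall j, ocoord p j = ocoord q j) -> p = q.
Proof. by move=> pq; apply/val_inj/ffunP. Qed.

Definition onlast (l : 'I_n) (p : B) : bool := ocoord p l == (r l).-1 :> nat.

Lemma coord_ltVonlast (p : B) l : (Defs.coord p l < (r l).-1)%N || onlast l p.
Proof.
rewrite /onlast coordE; case: (r l) (ocoord_lt p l) => //= m.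
by rewrite ltnS leq_eqVlt orbC.
Qed.

Lemma onlast_ocoord_eq l (p q : B) :
  onlast l p -> onlast l q -> ocoord p l = ocoord q l.
Proof. by move=> /eqP p_last /eqP q_last; apply: val_inj; rewrite /= p_last q_last. Qed.

Lemma onlast_swapc l l' (a b : B) :
  onlast l a || onlast l b -> onlast l (swapc l' a b) || onlast l (swapc l' b a).
Proof. by rewrite /onlast !ocoord_swapc; case: (l == l') => //; rewrite orbC. Qed.

End Box.

Section Inclusion.
Variables (k : fieldType) (n : nat) (r : 'I_n -> nat).
Local Notation B := (box r).
Local Notation inI l := (ideal_gen (@gens_I k n r l)).
Local Notation inJ := (ideal_gen (@gens_J k n r)).

Lemma xA_onlast_in_I l (p : B) : onlast l p -> inI l (xA k p).
Proof. by move/eqP=> p_last; apply: ideal_gen_mem; right; exists p. Qed.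

Lemma xAM_onlast_in_I l a b : onlast l a || onlast l b -> inI l (xA k a * xA k b).
Proof.
by case/orP=> /xA_onlast_in_I ?; [apply: ideal_genMr | apply: ideal_genMl].
Qed.

Lemma minor2_in_I l l' a b : inI l (minor2 k l' a b).
Proof.
have [[a_lt b_lt] | ab_last] :
    (Defs.coord a l < (r l).-1 /\ Defs.coord b l < (r l).-1)%N \/
    onlast l a || onlast l b.
  by case/orP: (coord_ltVonlast a l) => ->; case/orP: (coord_ltVonlast b l) => ->;
     rewrite ?orbT; auto.
  by apply: ideal_gen_mem; left; exists l', a, b.
by apply: ideal_genB; apply: xAM_onlast_in_I; last apply: onlast_swapc.
Qed.

Lemma idealJ_sub_idealI l f : inJ f -> inI l f.
Proof.
apply: ideal_gen_sub => _ [[l' [a [b ->]]] | [p [p_last ->]]].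
  exact: minor2_in_I.
by apply/xA_onlast_in_I/eqP; apply: p_last.
Qed.

End Inclusion.

Lemma mcoeff_mulX_eq0 (R : nzRingType) (N : nat) (g : {mpoly R[N]})
    (u s : 'X_{1..N}) i :
  (0 < u i)%N -> s i = 0%N -> (g * 'X_[u])@_s = 0.
Proof.
move=> u_i s_i; rewrite [g]mpolyE mulr_suml raddf_sum /=; apply: big1 => m _.
rewrite -scalerAl -mpolyXD mcoeffZ mcoeffX.
suff /negbTE -> : (m + u)%MM != s by rewrite mulr0.
by apply: contraTneq u_i => ms; rewrite -leqNgt -s_i -ms mnmDE leq_addl.
Qed.

Section Segre.
Variables (k : fieldType) (n : nat) (r : 'I_n -> nat).
Local Notation B := (box r).
Local Notation K := #|{: 'I_n * 'I_(boxM r)}|.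
Local Notation inI l := (ideal_gen (@gens_I k n r l)).

Definition segre_var (l : 'I_n) (v : 'I_(boxM r)) : 'I_K := enum_rank (l, v).

Definition segreX (p : B) : 'X_{1..K} :=
  \big[+%MM/0%MM]_(l < n) U_(segre_var l (ocoord p l))%MM.

Lemma segreXE p l v : segreX p (segre_var l v) = (ocoord p l == v).
Proof.
rewrite /segreX mnm_sumE (bigD1 l) //= big1 ?addn0 => [|j jl];
  rewrite mnm1E (inj_eq enum_rank_inj) xpair_eqE ?eqxx //.
by rewrite (negbTE jl).
Qed.

Lemma segreX_swapc l a b :
  (segreX a + segreX b = segreX (swapc l a b) + segreX (swapc l b a))%MM.
Proof.
apply/mnmP => i; rewrite !mnmDE /segreX !mnm_sumE -!big_split /=.
by apply: eq_bigr => j _; rewrite !ocoord_swapc; case: (j == l) => //; apply: addnC.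
Qed.

Definition segre : {rmorphism polyA k r -> {mpoly k[K]}} :=
  mmap (@mpolyC K k) (fun i => 'X_[segreX (enum_val i)]).

Lemma segreC c : segre c%:MP = c%:MP.
Proof. exact: mmapC. Qed.

Lemma segre_xA p : segre (xA k p) = 'X_[segreX p].
Proof. by rewrite /segre /= /xA mmapX mmap1U enum_rankK. Qed.

Lemma segre_minor2 l a b : segre (minor2 k l a b) = 0.
Proof. by rewrite rmorphB !rmorphM !segre_xA -!mpolyXD (segreX_swapc l) subrr. Qed.

Lemma segre_mcoeff_eq0 l f (s : 'X_{1..K}) : inI l f ->
  (forall p, onlast l p -> s (segre_var l (ocoord p l)) = 0%N) -> (segre f)@_s = 0.
Proof.
move=> [t [Ht ->]] s_last; rewrite rmorph_sum raddf_sum /=.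
apply: big1_seq => q /andP[_ /Ht [[l' [a [b [_ [_ ->]]]]] | [p [p_last ->]]]].
  by rewrite rmorphM segre_minor2 mulr0 mcoeff0.
have p_onlast : onlast l p by apply/eqP; apply: p_last.
rewrite rmorphM segre_xA (mcoeff_mulX_eq0 _ (i := segre_var l (ocoord p l))) ?s_last //.
by rewrite segreXE eqxx.
Qed.

End Segre.

Section Binomials.
Variables (k : fieldType) (n : nat) (r : 'I_n -> nat).
Variable S : polyA k r -> Prop.
Hypothesis S_minor2 : forall l a b, S (minor2 k l a b).
Local Notation B := (box r).

Definition monoA (P : seq B) : polyA k r := \prod_(p <- P) xA k p.

Definition same_marginals (P Q : seq B) :=
  forall l, perm_eq [seq ocoord p l | p <- P] [seq ocoord p l | p <- Q].

Definition linked (P Q : seq B) :=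
  same_marginals P Q /\ ideal_gen S (monoA P - monoA Q).

Lemma linked_refl P : linked P P.
Proof. by split=> [l|]; rewrite ?perm_refl // subrr; apply: ideal_gen0. Qed.

Lemma linked_trans P Q R : linked P Q -> linked Q R -> linked P R.
Proof.
move=> [PQ SPQ] [QR SQR]; split=> [l|]; first exact: perm_trans (PQ l) (QR l).
by rewrite -[monoA P](subrK (monoA Q)) -addrA; apply: ideal_genD.
Qed.

Lemma linked_perm P Q : perm_eq P Q -> linked P Q.
Proof.
move=> PQ; split=> [l|]; first exact: perm_map.
by rewrite /monoA (perm_big _ PQ) subrr; apply: ideal_gen0.
Qed.

Lemma linked_swapc l a b R :
  linked (a :: b :: R) (swapc l a b :: swapc l b a :: R).
Proof.
split=> [j|].
  by rewrite /= !ocoord_swapc; case: (j == l) => //; apply/permP => x /=; rewrite addnCA.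
have -> : monoA (a :: b :: R) - monoA (swapc l a b :: swapc l b a :: R) =
          minor2 k l a b * monoA R by rewrite /monoA !big_cons /minor2 !mulrA mulrBl.
exact/ideal_genMr/ideal_gen_mem.
Qed.

Lemma linked_exchange l a b P : a \in P -> b \in rem a P ->
  linked P (swapc l a b :: swapc l b a :: rem b (rem a P)).
Proof.
move=> aP bP; apply: linked_trans (linked_swapc l a b _).
by apply/linked_perm/(perm_trans (perm_to_rem aP)); rewrite perm_cons perm_to_rem.
Qed.

Lemma linked_align j q p0 P :
  p0 \in P -> ocoord q j \in [seq ocoord p j | p <- P] ->
  exists P' p1, [/\ linked P P', p1 \in P', ocoord p1 j = ocoord q j &
                    forall l, l != j -> ocoord p1 l = ocoord p0 l].
Proof.
move=> p0P /mapP[p1 p1P q_j].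
have [p0_j | p0_j] := eqVneq (ocoord p0 j) (ocoord q j).
  by exists P, p0; split=> //; apply: linked_refl.
have p1P' : p1 \in rem p0 P.
  by apply: rem_mem => //; apply: contra_neq p0_j => p10; rewrite q_j p10.
exists (swapc j p0 p1 :: swapc j p1 p0 :: rem p1 (rem p0 P)), (swapc j p0 p1).
split; [exact: linked_exchange | exact: mem_head | |].
  by rewrite ocoord_swapc eqxx q_j.
by move=> l /negbTE lj; rewrite ocoord_swapc lj.
Qed.

Lemma linked_gather q p0 P : p0 \in P ->
  (forall l, ocoord q l \in [seq ocoord p l | p <- P]) ->
  exists2 P', linked P P' & q \in P'.
Proof.
move=> p0P q_marg.
suff /(_ n (leqnn n)) [P' [p1 [PP' p1P' p1q]]] : forall j, (j <= n)%N ->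
    exists P' p1, [/\ linked P P', p1 \in P' &
                      forall l : 'I_n, (l < j)%N -> ocoord p1 l = ocoord q l].
  by exists P'; rewrite // -(box_eq (fun l => p1q l (ltn_ord l))).
elim=> [_ | j IHj jn]; first by exists P, p0; split=> //; apply: linked_refl.
have [P' [p1 [PP' p1P' p1q]]] := IHj (ltnW jn).
have q_marg' : ocoord q (Ordinal jn) \in [seq ocoord p (Ordinal jn) | p <- P'].
  by rewrite -(perm_mem (PP'.1 _)).
have [P'' [p2 [P'P'' p2P'' p2_j p2_other]]] := linked_align p1P' q_marg'.
exists P'', p2; split=> //; first exact: linked_trans PP' P'P''.
move=> l; rewrite ltnS leq_eqVlt => /orP[/eqP lj | l_lt_j].
  by have -> : l = Ordinal jn by apply: val_inj.
by rewrite p2_other ?p1q //; apply: contraTneq l_lt_j => ->; rewrite ltnn.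
Qed.

Lemma binomial_in_ideal (l0 : 'I_n) P Q :
  same_marginals P Q -> ideal_gen S (monoA P - monoA Q).
Proof.
elim: Q P => [|q Q IHQ] P PQ.
  have /size0nil -> : size P = 0%N.
    by rewrite -(size_map (fun p => ocoord p l0)) (perm_size (PQ l0)).
  by rewrite subrr; apply: ideal_gen0.
have q_marg l : ocoord q l \in [seq ocoord p l | p <- P].
  by rewrite (perm_mem (PQ l)) mem_head.
have [p0 p0P _] := mapP (q_marg l0).
have [P' [PP' SPP'] qP'] := linked_gather p0P q_marg.
have P'Q : same_marginals (rem q P') Q.
  move=> l; rewrite -(perm_cons (ocoord q l)); apply: perm_trans _ (PQ l).
  by rewrite perm_sym; apply: perm_trans (PP' l) (perm_map _ (perm_to_rem qP')).
have -> : monoA P - monoA (q :: Q) =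
          (monoA P - monoA P') + xA k q * (monoA (rem q P') - monoA Q).
  by rewrite /monoA (perm_big _ (perm_to_rem qP')) !big_cons mulrBr addrA subrK.
by apply: ideal_genD => //; apply/ideal_genMl/IHQ.
Qed.

End Binomials.

Lemma big_fibers (R : Type) (idx : R) (op : Monoid.com_law idx) (I J : eqType)
    (t : seq I) (g : I -> J) (F : I -> R) :
  \big[op/idx]_(i <- t) F i =
  \big[op/idx]_(j <- undup (map g t)) \big[op/idx]_(i <- t | g i == j) F i.
Proof.
symmetry; rewrite (exchange_big_dep predT) //=; apply: eq_big_seq => i it.
rewrite (eq_bigl (pred1 (g i))) => [|j]; last by rewrite /= eq_sym.
by rewrite -big_filter filter_pred1_uniq ?undup_uniq ?mem_undup ?map_f // big_seq1.
Qed.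

Section Fibers.
Variables (k : fieldType) (n : nat) (r : 'I_n -> nat).
Local Notation B := (box r).
Local Notation N := #|B|.
Local Notation K := #|{: 'I_n * 'I_(boxM r)}|.

Definition points (m : 'X_{1..N}) : seq B :=
  flatten [seq nseq (m i) (enum_val i) | i <- enum 'I_N].

Lemma monoA_points m : monoA k (points m) = 'X_[m].
Proof.
rewrite /monoA /points big_flatten /= big_map mpolyXE_id -[RHS]big_enum /=.
apply: eq_bigr => i _; elim: (m i) => [|c IHc]; first by rewrite big_nil expr0.
by rewrite big_cons IHc exprS /xA enum_valK.
Qed.

Definition segreS (P : seq B) : 'X_{1..K} := \big[+%MM/0%MM]_(p <- P) segreX p.

Lemma segre_monoA P : segre k r (monoA k P) = 'X_[segreS P].
Proof.
elim: P => [|p P IHP]; first by rewrite /monoA /segreS !big_nil rmorph1 mpolyX0.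
by rewrite /monoA /segreS !big_cons rmorphM segre_xA mpolyXD -IHP.
Qed.

Lemma segreS_count P l v :
  segreS P (segre_var l v) = count (fun p => ocoord p l == v) P.
Proof.
elim: P => [|p P IHP]; first by rewrite /segreS big_nil mnm0E.
by rewrite /segreS big_cons mnmDE -/(segreS P) IHP segreXE.
Qed.

Lemma segreS_same_marginals P Q : segreS P = segreS Q -> same_marginals P Q.
Proof.
move=> PQ l; apply/allP => v _; apply/eqP; rewrite !count_map -!segreS_count.
by rewrite PQ.
Qed.

Definition segreM (m : 'X_{1..N}) := segreS (points m).

Lemma segre_mcoeff f s :
  (segre k r f)@_s = \sum_(m <- msupp f | segreM m == s) f@_m.
Proof.
rewrite {1}[f]mpolyE rmorph_sum raddf_sum [RHS]big_mkcond /=; apply: eq_bigr => m _.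
rewrite -mul_mpolyC rmorphM -monoA_points segre_monoA segreC mcoeffCM mcoeffX.
by case: eqP; rewrite ?mulr1 ?mulr0.
Qed.

End Fibers.

Section Corner.
Variables (k : fieldType) (n : nat) (r : 'I_n -> nat).
Hypothesis r_gt0 : forall j, (0 < r j)%N.
Local Notation B := (box r).
Local Notation inI l := (ideal_gen (@gens_I k n r l)).
Local Notation inJ := (ideal_gen (@gens_J k n r)).
Local Notation K := #|{: 'I_n * 'I_(boxM r)}|.

Lemma last_lt_boxM l : ((r l).-1 < boxM r)%N.
Proof. by rewrite (leq_trans _ (@leq_bigmax _ (fun j => r j) l)) ?ltn_predL. Qed.

Definition corner_fun : {ffun 'I_n -> 'I_(boxM r)} :=
  [ffun l => Ordinal (last_lt_boxM l)].

Lemma corner_fun_in_box : [forall j, corner_fun j < r j]%N.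
Proof. by apply/forallP => j; rewrite ffunE /= ltn_predL. Qed.

Definition corner : B := Sub corner_fun corner_fun_in_box.

Lemma onlast_corner l : onlast l corner.
Proof. by rewrite /onlast /ocoord SubK ffunE. Qed.

Definition full (s : 'X_{1..K}) :=
  [forall l, 0 < s (segre_var l (ocoord corner l))]%N.

Lemma minor2_gens_J l (a b : B) : gens_J (minor2 k l a b).
Proof. by left; exists l, a, b. Qed.

Lemma monomial_full_in_J (l0 : 'I_n) m : full (segreM m) -> inJ 'X_[m].
Proof.
move=> /forallP m_full.
have corner_marg l : ocoord corner l \in [seq ocoord p l | p <- points m].
  have := m_full l; rewrite segreS_count -has_count => /hasP[p pm /eqP <-].
  exact: map_f.
have [p0 p0m _] := mapP (corner_marg l0).
have [P [_ SmP] cP] := linked_gather minor2_gens_J p0m corner_marg.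
have -> : 'X_[m] =
    (monoA k (points m) - monoA k P) + xA k corner * monoA k (rem corner P).
  by rewrite monoA_points /monoA (perm_big _ (perm_to_rem cP)) big_cons subrK.
apply: ideal_genD => //; apply/ideal_genMr/ideal_gen_mem; right.
by exists corner; split=> // j; apply/eqP/onlast_corner.
Qed.

Lemma fiber_in_J (l0 : 'I_n) f m0 : (forall l, inI l f) ->
  inJ (\sum_(m <- msupp f | segreM m == segreM m0) f@_m *: 'X_[m]).
Proof.
move=> fI; have [m0_full | /forallPn [l]] := boolP (full (segreM m0)).
  apply: ideal_gen_sum => m _ /eqP m_m0; rewrite -mul_mpolyC.
  by apply/ideal_genMl/(monomial_full_in_J l0); rewrite m_m0.
rewrite -eqn0Ngt => /eqP m0_l.
have coef0 : \sum_(m <- msupp f | segreM m == segreM m0) f@_m = 0.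
  rewrite -segre_mcoeff (segre_mcoeff_eq0 (fI l)) // => p p_last.
  by rewrite (onlast_ocoord_eq p_last (onlast_corner l)).
rewrite (eq_bigr (fun m => f@_m *: ('X_[m] - 'X_[m0]) + f@_m *: 'X_[m0])) => [|m _];
  last by rewrite -scalerDr subrK.
rewrite big_split /= -scaler_suml coef0 scale0r addr0.
apply: ideal_gen_sum => m _ /eqP m_m0; rewrite -mul_mpolyC -!monoA_points.
by apply/ideal_genMl/(binomial_in_ideal minor2_gens_J l)/segreS_same_marginals.
Qed.

Lemma idealI_sub_idealJ (l0 : 'I_n) f : (forall l, inI l f) -> inJ f.
Proof.
move=> fI; rewrite [f]mpolyE (big_fibers _ _ (@segreM n r)).
by apply: ideal_gen_sum => _ /[!mem_undup] /mapP[m0 _ ->] _; apply: fiber_in_J.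
Qed.

End Corner.

Theorem corollary1p1p1 (k : fieldType) (n : nat) (r : 'I_n -> nat) :
  (2 <= n)%N -> (forall j, (0 < r j)%N) ->
  forall f : polyA k r,
    (forall l : 'I_n, ideal_gen (@gens_I k n r l) f) <-> ideal_gen (@gens_J k n r) f.
Proof.
move=> n_ge2 r_gt0 f; split=> [fI | fJ l]; last exact: idealJ_sub_idealI.
exact: (idealI_sub_idealJ r_gt0 (Ordinal (ltnW n_ge2))).
Qed.
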